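(* Let $A$ be a system with state space $\Omega_A$ that supports uniform universal steering, with steering partner system $B$ (state space $\Omega_B$) and composite state space $\Omega_A\otimes\Omega_B$ as in the context. Let $$\lambda_{\rm opt}=\inf_{e,f\in\mathscr{E}(\Omega_A)}\lambda_{e,f}.$$ Then the (generalised) Tsirelson bound, i.e. the supremum of the Bell functional $$\mathbb{B}=\omega\big(A_1\otimes B_1+A_1\otimes B_2+A_2\otimes B_1-A_2\otimes B_2\big)$$ over all states $\omega\in\Omega_A\otimes\Omega_B$ and all dichotomic ($\pm1$-valued) observables $\mathsf{A}_1,\mathsf{A}_2$ on $\Omega_A$ and $\mathsf{B}_1,\mathsf{B}_2$ on $\Omega_B$, is given by the tight inequality $$\mathbb{B}\le\frac{2}{\lambda_{\rm opt}},$$ which can be saturated.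
   Context: General probabilistic models: a state space $\Omega$ is a compact convex subset of a finite-dimensional real vector space $V$. $A(\Omega)$ denotes the ordered linear space of affine functionals on $\Omega$ with the pointwise order ($f\ge 0$ iff $f(\omega)\ge0$ for all $\omega\in\Omega$) and order unit $u$ ($u(\omega)=1$ for all $\omega$). The effects are $\mathscr{E}(\Omega)=\{e\in A(\Omega): 0\le e(\omega)\le 1\ \forall\omega\in\Omega\}$. A discrete observable is a map $\mathsf{O}$ from a finite outcome set into $\mathscr{E}(\Omega)$ with $\sum_x\mathsf{O}[x]=u$. A dichotomic observable $\mathsf{O}$ with outcomes $\pm1$ is determined by the effect $e=\mathsf{O}[+1]$, with $\mathsf{O}[-1]=e'=u-e$; its associated functional is $O=\mathsf{O}[+1]-\mathsf{O}[-1]$. The cone $V_+$ is generated by $\Omega$ and $V^*$, $V^*_+$ denote the dual space and dual cone. Joint measurability: effects $e,f$ are jointly measurable if there exists $g\in A(\Omega)$ with $0\le g$, $g\le e$, $g\le f$, $e+f\le g+u$. Smearing: for $\lambda\in[0,1]$, $e^{(\lambda)}=\lambda e+\frac{1-\lambda}{2}u$. For effects $e,f$, $\lambda_{e,f}$ is the maximum of $\lambda\in[0,1]$ such that $e^{(\lambda)}$ and $f^{(\lambda)}$ are jointly measurable (i.e. there is $g\in A(\Omega)$ with $g\le e^{(\lambda)}$, $g\le f^{(\lambda)}$, $0\le g$, $e^{(\lambda)}+f^{(\lambda)}-u\le g$). Composite systems: the state space of a composite of systems with state spaces $\Omega_1\subset V_1$, $\Omega_2\subset V_2$ is $\Omega_1\otimes\Omega_2=\{\omega\in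 (V_1\otimes V_2)_+ : (u_1\otimes u_2)(\omega)=1\}$, where the cone $(V_1\otimes V_2)_+$ is any cone lying between the minimal cone $\{\sum_{i,j}\lambda_{ij}v_1^{(i)}\otimes v_2^{(j)}:\lambda_{ij}\ge0,\ v_k^{(i)}\in(V_k)_+\}$ and the maximal cone $(V_1^*\otimes_{min}V_2^* )_+^*$. For $a\in V_1^*$, $b\in V_2^*$ write $\omega(a,b)=(a\otimes b)(\omega)$, extended bilinearly. Each bipartite state $\omega$ defines the linear map $\hat\omega:V_2^*\to V_1$ by $a(\hat\omega(b))=\omega(a,b)$. The $A$-marginal of $\omega\in\Omega_A\otimes\Omega_B$ is $\omega^A=\hat\omega(u_B)\in\Omega_A$. Steering: a state $\omega\in\Omega_A\otimes\Omega_B$ is steering for its $A$-marginal if for every finite collection $\alpha_1,\dots,\alpha_n\in(V_A)_+$ with $0\le u_A(\alpha_i)\le1$ and $\sum_i\alpha_i=\omega^A$, there exists an observable $\{e_1,\dots,e_n\}\subset\mathscr{E}(\Omega_B)$ (with $\sum_i e_i=u_B$) such that $\alpha_i=\hat\omega(e_i)$ for all $i$. A system $A$ supports uniform universal steering if there exist a system $B$ with state space $\Omega_B$ and a composite state space $\Omega_A\otimes\Omega_B$ such that for every $\alpha\in\Omega_A$ there is a state $\omega_\alpha\in\Omega_A\otimes\Omega_B$ with $\omega_\alpha^A=\alpha$ that is steering for its $A$-marginal. *)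

From HB Require Import structures.
From mathcomp Require Import all_boot all_order all_algebra.
From mathcomp Require Import all_classical all_reals all_analysis.
Set Implicit Arguments. Unset Strict Implicit. Unset Printing Implicit Defensive.
Import Order.TTheory GRing.Theory Num.Theory.
Import numFieldNormedType.Exports.
Local Open Scope classical_set_scope.
Local Open Scope ring_scope.

(** Finite-dimensional real vector space V = R^n : vectors are 'rV[R]_n.
    Linear functionals (elements of V^* ) are also represented by 'rV[R]_n,
    acting through the dot product [dot a x]. *)
Section GPT.
Variable R : realType.

Definition dot n (a x : 'rV[R]_n) : R := \sum_(i < n) a 0 i * x 0 i.

Definition is_state_space n (Om : set 'rV[R]_n) (u : 'rV[R]_n) : Prop :=
  [/\ Om !=set0,
      (forall x y t, Om x -> Om y -> 0 <= t <= 1 -> Om (t *: x + (1 - t) *: y)),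
      compact Om &
      (forall w, Om w -> dot u w = 1)].

Definition effect n (Om : set 'rV[R]_n) (u e : 'rV[R]_n) : Prop :=
  forall w, Om w -> 0 <= dot e w <= dot u w.

Definition jointly_measurable n (Om : set 'rV[R]_n) (u e f : 'rV[R]_n) : Prop :=
  exists g : 'rV[R]_n, forall w, Om w ->
    [/\ 0 <= dot g w, dot g w <= dot e w, dot g w <= dot f w &
        dot e w + dot f w <= dot g w + dot u w].

Definition smear n (u : 'rV[R]_n) (l : R) (e : 'rV[R]_n) : 'rV[R]_n :=
  l *: e + ((1 - l) / 2) *: u.

Definition lambda_ef n (Om : set 'rV[R]_n) (u e f : 'rV[R]_n) : R :=
  sup [set l : R | 0 <= l <= 1 /\
       jointly_measurable Om u (smear u l e) (smear u l f)].

Definition lambda_opt n (Om : set 'rV[R]_n) (u : 'rV[R]_n) : R :=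
  inf [set l : R | exists e f, [/\ effect Om u e, effect Om u f &
                                    l = lambda_ef Om u e f]].

(** cone V_+ generated by Omega (Omega convex: its rays) *)
Definition pos_cone n (Om : set 'rV[R]_n) : set 'rV[R]_n :=
  [set v | exists t, exists2 w, 0 <= t /\ Om w & v = t *: w].

Definition dual_cone n (Om : set 'rV[R]_n) : set 'rV[R]_n :=
  [set a | forall v, pos_cone Om v -> 0 <= dot a v].

(** V_1 (x) V_2 is represented by 'M[R]_(n1, n2). *)
Definition tens n1 n2 (x : 'rV[R]_n1) (y : 'rV[R]_n2) : 'M[R]_(n1, n2) :=
  \matrix_(i, j) (x 0 i * y 0 j).

(** (a (x) b)(w) = w(a,b) *)
Definition pair2 n1 n2 (w : 'M[R]_(n1, n2)) (a : 'rV[R]_n1) (b : 'rV[R]_n2) : R :=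
  \sum_(i < n1) \sum_(j < n2) a 0 i * w i j * b 0 j.

Definition mdot n1 n2 (phi w : 'M[R]_(n1, n2)) : R :=
  \sum_(i < n1) \sum_(j < n2) phi i j * w i j.

Definition min_tensor n1 n2 (C1 : set 'rV[R]_n1) (C2 : set 'rV[R]_n2)
  : set 'M[R]_(n1, n2) :=
  [set w | exists k (x : 'I_k -> 'rV[R]_n1) (y : 'I_k -> 'rV[R]_n2),
     [/\ forall i, C1 (x i), forall i, C2 (y i) &
         w = \sum_(i < k) tens (x i) (y i)]].

Definition min_cone n1 n2 (Om1 : set 'rV[R]_n1) (Om2 : set 'rV[R]_n2) :=
  min_tensor (pos_cone Om1) (pos_cone Om2).

Definition max_cone n1 n2 (Om1 : set 'rV[R]_n1) (Om2 : set 'rV[R]_n2)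
  : set 'M[R]_(n1, n2) :=
  [set w | forall phi, min_tensor (dual_cone Om1) (dual_cone Om2) phi ->
           0 <= mdot phi w].

Definition composite_cone n1 n2 (Om1 : set 'rV[R]_n1) (Om2 : set 'rV[R]_n2)
  (K : set 'M[R]_(n1, n2)) : Prop :=
  [/\ (forall v w, K v -> K w -> K (v + w)),
      (forall t w, 0 <= t -> K w -> K (t *: w)),
      min_cone Om1 Om2 `<=` K & K `<=` max_cone Om1 Om2].

Definition composite_states n1 n2 (K : set 'M[R]_(n1, n2))
  (u1 : 'rV[R]_n1) (u2 : 'rV[R]_n2) : set 'M[R]_(n1, n2) :=
  [set w | K w /\ pair2 w u1 u2 = 1].

(** \hat w : V_2^* -> V_1, a(\hat w(b)) = w(a,b) *)
Definition hatw n1 n2 (w : 'M[R]_(n1, n2)) (b : 'rV[R]_n2) : 'rV[R]_n1 :=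
  \row_i \sum_(j < n2) w i j * b 0 j.

Definition marginalA n1 n2 (w : 'M[R]_(n1, n2)) (u2 : 'rV[R]_n2) : 'rV[R]_n1 :=
  hatw w u2.

Definition steering n1 n2 (OmA : set 'rV[R]_n1) (uA : 'rV[R]_n1)
  (OmB : set 'rV[R]_n2) (uB : 'rV[R]_n2) (w : 'M[R]_(n1, n2)) : Prop :=
  forall k (al : 'I_k -> 'rV[R]_n1),
    (forall i, pos_cone OmA (al i)) ->
    (forall i, 0 <= dot uA (al i) <= 1) ->
    \sum_(i < k) al i = marginalA w uB ->
    exists e : 'I_k -> 'rV[R]_n2,
      [/\ forall i, effect OmB uB (e i),
          (forall v, OmB v -> \sum_(i < k) dot (e i) v = dot uB v) &
          forall i, al i = hatw w (e i)].

Definition uniform_universal_steering_with n1 n2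
  (OmA : set 'rV[R]_n1) (uA : 'rV[R]_n1) (OmB : set 'rV[R]_n2) (uB : 'rV[R]_n2)
  (K : set 'M[R]_(n1, n2)) : Prop :=
  forall al, OmA al -> exists w, composite_states K uA uB w /\
     marginalA w uB = al /\ steering OmA uA OmB uB w.

(** dichotomic observable with effect e: O = e - (u - e) *)
Definition dich n (u e : 'rV[R]_n) : 'rV[R]_n := e - (u - e).

Definition bell n1 n2 (uA : 'rV[R]_n1) (uB : 'rV[R]_n2) (w : 'M[R]_(n1, n2))
  (a1 a2 : 'rV[R]_n1) (b1 b2 : 'rV[R]_n2) : R :=
  let A1 := dich uA a1 in let A2 := dich uA a2 in
  let B1 := dich uB b1 in let B2 := dich uB b2 in
  pair2 w A1 B1 + pair2 w A1 B2 + pair2 w A2 B1 - pair2 w A2 B2.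

End GPT.

From HB Require Import structures.
From mathcomp Require Import all_boot all_order all_algebra.
From mathcomp Require Import all_classical all_reals all_analysis.
From mathcomp Require Import ring lra.
Import Order.TTheory GRing.Theory Num.Theory.
Import numFieldNormedType.Exports.
Local Open Scope classical_set_scope.
Local Open Scope ring_scope.
Set Implicit Arguments. Unset Strict Implicit.

(* If [smear l e] and [smear l f] are jointly measurable, the CHSH value of these
   smeared effects is at most 2, and smearing scales the CHSH value by [l]; hence
   [l * bell <= 2] for every admissible [l], and so [lambda_opt * bell <= 2].
   Conversely, for [lambda_ef e f < l <= 1] the linear program expressing joint
   measurability of [smear l e] and [smear l f] is infeasible, and a nearest-point
   argument in a compact convex set yields a dual certificate: cone elements with
   [p1 + p4 = p2 + p3 = alpha] a state and negative dual value.  Steering from a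
   state with A-marginal [alpha], Bob prepares the splittings [alpha = p4 + p1] and
   [alpha = p3 + p2] with effects [b1] and [b2], and the CHSH value of [e], [f],
   [b1], [b2] is then [(2 - 4 * dual value) / l > 2 / l]. *)

Section Pairings.
Variable R : realType.

Lemma dotDl n (a b x : 'rV[R]_n) : dot (a + b) x = dot a x + dot b x.
Proof. by rewrite /dot -big_split; apply: eq_bigr => i _; rewrite mxE mulrDl. Qed.

Lemma dotDr n (a x y : 'rV[R]_n) : dot a (x + y) = dot a x + dot a y.
Proof. by rewrite /dot -big_split; apply: eq_bigr => i _; rewrite mxE mulrDr. Qed.

Lemma dotZl n k (a x : 'rV[R]_n) : dot (k *: a) x = k * dot a x.
Proof. by rewrite /dot mulr_sumr; apply: eq_bigr => i _; rewrite mxE mulrA. Qed.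

Lemma dotZr n k (a x : 'rV[R]_n) : dot a (k *: x) = k * dot a x.
Proof. by rewrite /dot mulr_sumr; apply: eq_bigr => i _; rewrite mxE mulrCA. Qed.

Lemma dotNl n (a x : 'rV[R]_n) : dot (- a) x = - dot a x.
Proof. by rewrite -scaleN1r dotZl mulN1r. Qed.

Lemma dotNr n (a x : 'rV[R]_n) : dot a (- x) = - dot a x.
Proof. by rewrite -scaleN1r dotZr mulN1r. Qed.

Lemma dot0l n (x : 'rV[R]_n) : dot 0 x = 0.
Proof. by rewrite -(scale0r 0) dotZl mul0r. Qed.

Lemma dot0r n (x : 'rV[R]_n) : dot x 0 = 0.
Proof. by rewrite -(scale0r 0) dotZr mul0r. Qed.

Lemma dotC n (a x : 'rV[R]_n) : dot a x = dot x a.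
Proof. by rewrite /dot; apply: eq_bigr => i _; rewrite mulrC. Qed.

Lemma dotxx_ge0 n (x : 'rV[R]_n) : 0 <= dot x x.
Proof. by rewrite /dot; apply: sumr_ge0 => i _; rewrite -expr2 sqr_ge0. Qed.

Lemma dotxx_eq0 n (x : 'rV[R]_n) : dot x x = 0 -> x = 0.
Proof.
move=> /eqP; rewrite /dot psumr_eq0 => [/allP x0|i _]; last by rewrite -expr2 sqr_ge0.
apply/rowP => j; have /implyP/(_ isT) := x0 j (mem_index_enum j).
by rewrite -expr2 sqrf_eq0 mxE => /eqP.
Qed.

Lemma hatwD n1 n2 (w : 'M[R]_(n1, n2)) b c : hatw w (b + c) = hatw w b + hatw w c.
Proof.
by apply/rowP => i; rewrite !mxE -big_split; apply: eq_bigr => j _; rewrite mxE mulrDr.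
Qed.

Lemma hatwZ n1 n2 (w : 'M[R]_(n1, n2)) k b : hatw w (k *: b) = k *: hatw w b.
Proof.
by apply/rowP => i; rewrite !mxE mulr_sumr; apply: eq_bigr => j _; rewrite mxE mulrCA.
Qed.

Lemma hatwN n1 n2 (w : 'M[R]_(n1, n2)) b : hatw w (- b) = - hatw w b.
Proof. by rewrite -scaleN1r hatwZ scaleN1r. Qed.

Lemma pair2E n1 n2 (w : 'M[R]_(n1, n2)) a b : pair2 w a b = dot a (hatw w b).
Proof.
rewrite /pair2 /dot; apply: eq_bigr => i _; rewrite mxE mulr_sumr.
by apply: eq_bigr => j _; rewrite mulrA.
Qed.

Lemma mdot_tens n1 n2 (w : 'M[R]_(n1, n2)) a b : mdot (tens a b) w = pair2 w a b.
Proof.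
by rewrite /pair2 /mdot; apply: eq_bigr => i _; apply: eq_bigr => j _; rewrite mxE mulrAC.
Qed.

End Pairings.

Ltac dot_expand :=
  do 4 rewrite ?hatwD ?hatwN ?hatwZ ?dotDl ?dotNl ?dotDr ?dotNr ?dotZl ?dotZr ?dot0l ?dot0r.

Section Cones.
Variables (R : realType) (n : nat) (Om : set 'rV[R]_n) (u : 'rV[R]_n).
Hypothesis Om_state : is_state_space Om u.

Lemma cone_combination t1 t2 w1 w2 : 0 <= t1 -> 0 <= t2 -> Om w1 -> Om w2 ->
  exists2 w, Om w & t1 *: w1 + t2 *: w2 = (t1 + t2) *: w.
Proof.
case: Om_state => _ Om_conv _ _ t1_ge0 t2_ge0 Om_w1 Om_w2.
have [t0|tN0] := eqVneq (t1 + t2) 0.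
  have t1_0 : t1 = 0 by lra.
  have t2_0 : t2 = 0 by lra.
  by exists w1 => //; rewrite t0 t1_0 t2_0 !scale0r addr0.
have t_gt0 : 0 < t1 + t2 by rewrite lt_def tN0 addr_ge0.
exists ((t1 / (t1 + t2)) *: w1 + (1 - t1 / (t1 + t2)) *: w2).
  apply: Om_conv => //; rewrite divr_ge0 ?addr_ge0 //=.
  by rewrite ler_pdivrMr // mul1r lerDl.
rewrite scalerDr !scalerA; congr (_ *: _ + _ *: _).
  by rewrite mulrCA divff ?mulr1.
by rewrite mulrBr mulr1 mulrCA divff ?mulr1 // addrC addKr.
Qed.

Lemma pos_coneD v1 v2 : pos_cone Om v1 -> pos_cone Om v2 -> pos_cone Om (v1 + v2).
Proof.
move=> [t1 [w1 [t1_ge0 Om_w1] ->]] [t2 [w2 [t2_ge0 Om_w2] ->]].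
have [w Om_w ->] := cone_combination t1_ge0 t2_ge0 Om_w1 Om_w2.
by exists (t1 + t2), w => //; split => //; rewrite addr_ge0.
Qed.

Lemma pos_coneZ k v : 0 <= k -> pos_cone Om v -> pos_cone Om (k *: v).
Proof.
move=> k_ge0 [t [w [t_ge0 Om_w] ->]]; exists (k * t), w; last by rewrite scalerA.
by split => //; rewrite mulr_ge0.
Qed.

Lemma pos_cone_unit_ge0 v : pos_cone Om v -> 0 <= dot u v.
Proof.
by case: Om_state => _ _ _ u1 [t [w [t_ge0 Om_w] ->]]; rewrite dotZr u1 // mulr1.
Qed.

Lemma pos_cone_unit_eq0 v : pos_cone Om v -> dot u v = 0 -> v = 0.
Proof.
by case: Om_state => _ _ _ u1 [t [w [_ Om_w] ->]]; rewrite dotZr u1 // mulr1 => ->; rewrite scale0r.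
Qed.

Lemma dual_coneP a : (forall w, Om w -> 0 <= dot a w) -> dual_cone Om a.
Proof. by move=> a_ge0 v [t [w [t_ge0 Om_w] ->]]; rewrite dotZr mulr_ge0 ?a_ge0. Qed.

Lemma effect_dual_cone e : effect Om u e -> dual_cone Om e /\ dual_cone Om (u - e).
Proof.
move=> e_eff; split; apply: dual_coneP => w /e_eff /andP[] //.
by rewrite dotDl dotNl subr_ge0.
Qed.

Lemma effect0 : effect Om u 0.
Proof. by case: Om_state => _ _ _ u1 w Om_w; rewrite dot0l u1 // lexx ler01. Qed.

Lemma effect_unit : effect Om u u.
Proof. by case: Om_state => _ _ _ u1 w Om_w; rewrite u1 // lexx ler01. Qed.

End Cones.

Lemma composite_pair2_ge0 (R : realType) n1 n2 (Om1 : set 'rV[R]_n1)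
    (Om2 : set 'rV[R]_n2) K w a b :
  composite_cone Om1 Om2 K -> K w -> dual_cone Om1 a -> dual_cone Om2 b ->
  0 <= pair2 w a b.
Proof.
move=> [_ _ _ K_max] Kw a_dual b_dual; rewrite -mdot_tens; apply: (K_max _ Kw).
by exists 1%N, (fun=> a), (fun=> b); split => //; rewrite big_ord1.
Qed.

Section UpperBound.
Variable R : realType.

Lemma dich_smear n (u e : 'rV[R]_n) l : dich u (smear u l e) = l *: dich u e.
Proof. by apply/rowP => i; rewrite /dich /smear !mxE; field. Qed.

Lemma smear_smear n (u e : 'rV[R]_n) s l : smear u s (smear u l e) = smear u (s * l) e.
Proof. by apply/rowP => i; rewrite /smear !mxE; field. Qed.

Lemma bell_smear n1 n2 (uA : 'rV[R]_n1) (uB : 'rV[R]_n2) w a1 a2 b1 b2 l :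
  bell uA uB w (smear uA l a1) (smear uA l a2) b1 b2 = l * bell uA uB w a1 a2 b1 b2.
Proof. by rewrite /bell /= !dich_smear !pair2E !dotZl; ring. Qed.

(* For a joint effect [g], [2 - bell] is four times the sum of the four
   nonnegative pairings below. *)
Lemma jointly_measurable_bell_le2 n1 n2 (OmA : set 'rV[R]_n1) uA
    (OmB : set 'rV[R]_n2) uB K w e f b1 b2 :
  composite_cone OmA OmB K -> composite_states K uA uB w ->
  effect OmB uB b1 -> effect OmB uB b2 ->
  jointly_measurable OmA uA e f -> bell uA uB w e f b1 b2 <= 2.
Proof.
move=> KC [Kw w1] /(effect_dual_cone (u := uB)) [b1_dual b1c_dual]
  /(effect_dual_cone (u := uB)) [b2_dual b2c_dual] [g g_jm].
have g_dual : dual_cone OmA g by apply: dual_coneP => v /g_jm [].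
have eg_dual : dual_cone OmA (e - g).
  by apply: dual_coneP => v /g_jm [*]; rewrite dotDl dotNl subr_ge0.
have fg_dual : dual_cone OmA (f - g).
  by apply: dual_coneP => v /g_jm [*]; rewrite dotDl dotNl subr_ge0.
have rest_dual : dual_cone OmA (uA - e - f + g).
  by apply: dual_coneP => v /g_jm [*]; dot_expand; lra.
have := composite_pair2_ge0 KC Kw g_dual b1c_dual.
have := composite_pair2_ge0 KC Kw eg_dual b2c_dual.
have := composite_pair2_ge0 KC Kw fg_dual b2_dual.
have := composite_pair2_ge0 KC Kw rest_dual b1_dual.
move: w1; rewrite /bell /dich /= !pair2E; dot_expand; lra.
Qed.

Definition jm_smearings n (Om : set 'rV[R]_n) u e f := [set l : R | 0 <= l <= 1 /\
  jointly_measurable Om u (smear u l e) (smear u l f)].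

Lemma jm_smearings_ub n (Om : set 'rV[R]_n) u e f : has_ubound (jm_smearings Om u e f).
Proof. by exists 1 => l [/andP[]]. Qed.

Lemma lambda_ef_ge n (Om : set 'rV[R]_n) u e f l :
  jm_smearings Om u e f l -> l <= lambda_ef Om u e f.
Proof. exact: (ub_le_sup (jm_smearings_ub Om u e f)). Qed.

Section Effects.
Variables (n : nat) (Om : set 'rV[R]_n) (u : 'rV[R]_n).
Hypothesis Om_state : is_state_space Om u.

(* joint effect: [(e + f) / 4] *)
Lemma jm_smearings_half e f : effect Om u e -> effect Om u f ->
  jm_smearings Om u e f (1 / 2).
Proof.
case: Om_state => _ _ _ u1 e_eff f_eff; split; first by apply/andP; split; lra.
exists ((1 / 4) *: (e + f)) => w Om_w.
move: (e_eff w Om_w) (f_eff w Om_w); rewrite /smear u1 //; dot_expand; rewrite u1 //.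
by move=> /andP[? ?] /andP[? ?]; split; lra.
Qed.

Lemma lambda_ef_ge_half e f : effect Om u e -> effect Om u f ->
  1 / 2 <= lambda_ef Om u e f.
Proof. by move=> e_eff f_eff; apply/lambda_ef_ge/jm_smearings_half. Qed.

Lemma lambda_ef_le1 e f : effect Om u e -> effect Om u f -> lambda_ef Om u e f <= 1.
Proof.
move=> e_eff f_eff; apply: ge_sup; first by exists (1 / 2); exact: jm_smearings_half.
by move=> l [/andP[]].
Qed.

Definition lambda_efs := [set l : R | exists e f,
  [/\ effect Om u e, effect Om u f & l = lambda_ef Om u e f]].

Lemma lambda_efs_lb : lbound lambda_efs (1 / 2).
Proof. by move=> l [e [f [e_eff f_eff ->]]]; exact: lambda_ef_ge_half. Qed.

Lemma lambda_efs_nonempty : lambda_efs !=set0.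
Proof. by exists (lambda_ef Om u 0 0), 0, 0; split => //; exact: effect0. Qed.

Lemma lambda_opt_ge_half : 1 / 2 <= lambda_opt Om u.
Proof. exact: lb_le_inf lambda_efs_nonempty lambda_efs_lb. Qed.

Lemma lambda_opt_le e f : effect Om u e -> effect Om u f ->
  lambda_opt Om u <= lambda_ef Om u e f.
Proof.
by move=> e_eff f_eff; apply: (ge_inf (ex_intro _ _ lambda_efs_lb)); exists e, f.
Qed.

Lemma lambda_opt_le1 : lambda_opt Om u <= 1.
Proof.
by apply: le_trans (lambda_opt_le (effect0 Om_state) (effect0 Om_state)) _;
  apply: lambda_ef_le1; apply: effect0.
Qed.

End Effects.

Lemma bell_le_lambda_opt n1 n2 (OmA : set 'rV[R]_n1) uA (OmB : set 'rV[R]_n2) uB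
    K w a1 a2 b1 b2 :
  is_state_space OmA uA -> composite_cone OmA OmB K -> composite_states K uA uB w ->
  effect OmA uA a1 -> effect OmA uA a2 -> effect OmB uB b1 -> effect OmB uB b2 ->
  bell uA uB w a1 a2 b1 b2 <= 2 / lambda_opt OmA uA.
Proof.
move=> OmA_state KC w_state a1_eff a2_eff b1_eff b2_eff.
have lo_gt0 : 0 < lambda_opt OmA uA by have := lambda_opt_ge_half OmA_state; lra.
set B := bell _ _ _ _ _ _ _.
have [B_le0|B_gt0] := lerP B 0.
  by apply: le_trans B_le0 _; rewrite divr_ge0 // ltW.
have lambda_ef_le : lambda_ef OmA uA a1 a2 <= 2 / B.
  apply: ge_sup; first by exists (1 / 2); exact: jm_smearings_half.
  move=> l [/andP[l_ge0 _] jm]; rewrite ler_pdivlMr //.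
  by rewrite /B -bell_smear; exact: jointly_measurable_bell_le2 KC w_state b1_eff b2_eff jm.
have := le_trans (lambda_opt_le OmA_state a1_eff a2_eff) lambda_ef_le.
by rewrite ler_pdivlMr // => lo_B_le; rewrite ler_pdivlMr // mulrC.
Qed.

End UpperBound.

Section NearSeparation.
Variables (R : realType) (n : nat).

Lemma continuous_dot (X : topologicalType) (f g : X -> 'rV[R]_n) :
  continuous f -> continuous g -> continuous (fun x => dot (f x) (g x)).
Proof.
move=> f_cont g_cont; rewrite /dot; apply: (continuous_big (@add_continuous R)) => j _ x.
apply: continuousM.
  by apply: (@continuous_comp _ _ _ f (fun M : 'rV[R]_n => M 0 j));
    [exact: f_cont | exact: coord_continuous].
by apply: (@continuous_comp _ _ _ g (fun M : 'rV[R]_n => M 0 j));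
  [exact: g_cont | exact: coord_continuous].
Qed.

Lemma continuous_add (X : topologicalType) (V : normedModType R) (f g : X -> V) :
  continuous f -> continuous g -> continuous (fun x => f x + g x).
Proof. by move=> f_cont g_cont x; move: (@continuousD _ _ _ f g x (f_cont x) (g_cont x)). Qed.

Lemma continuous_sub (X : topologicalType) (V : normedModType R) (f g : X -> V) :
  continuous f -> continuous g -> continuous (fun x => f x - g x).
Proof. by move=> f_cont g_cont x; move: (@continuousB _ _ _ f g x (f_cont x) (g_cont x)). Qed.

Lemma continuous_pair (X : topologicalType) (f : X -> 'rV[R]_n) (g : X -> R) :
  continuous f -> continuous g -> continuous (fun x => (f x, g x)).
Proof.
by move=> f_cont g_cont x;
  apply: (@cvg_pair _ _ _ (nbhs x) (nbhs (f x)) (nbhs (g x))); [exact: f_cont | exact: g_cont].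
Qed.

Lemma ge0_of_quadratic_perturbation (A B : R) : 0 <= B ->
  (forall s, 0 < s -> s <= 1 -> 0 <= 2 * s * A + s ^+ 2 * B) -> 0 <= A.
Proof.
move=> B_ge0 perturb; rewrite leNgt; apply/negP => A_lt0.
pose s := - A / (B - A).
have s_gt0 : 0 < s by rewrite divr_gt0; lra.
have sBA : s * (B - A) = - A by rewrite divfK //; lra.
have s_le1 : s <= 1 by rewrite ler_pdivrMr ?mul1r; lra.
have := perturb s s_gt0 s_le1.
have -> : 2 * s * A + s ^+ 2 * B = s * (A * (1 + s)) by rewrite expr2; nra.
by rewrite pmulr_rge0 // pmulr_lge0; lra.
Qed.

Variables (C : set ('rV[R]_n * R)) (c : R).
Hypothesis C_convex : forall z1 z2 s, C z1 -> C z2 -> 0 <= s <= 1 ->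
  C ((1 - s) *: z1.1 + s *: z2.1, (1 - s) * z1.2 + s * z2.2).

Let sqdist (z : 'rV[R]_n * R) := dot z.1 z.1 + (z.2 + c) * (z.2 + c).

Lemma sqdist_min_variational z0 : C z0 -> (forall z, C z -> sqdist z0 <= sqdist z) ->
  forall z, C z -> dot z0.1 z0.1 + (z0.2 + c) * z0.2 <= dot z0.1 z.1 + (z0.2 + c) * z.2.
Proof.
move=> C_z0 z0_min z C_z.
suff : 0 <= dot z0.1 z.1 - dot z0.1 z0.1 + (z0.2 + c) * (z.2 - z0.2) by lra.
apply: (@ge0_of_quadratic_perturbation _ (dot (z.1 - z0.1) (z.1 - z0.1) + (z.2 - z0.2) ^+ 2)).
  by rewrite addr_ge0 ?dotxx_ge0 ?sqr_ge0.
move=> s s_gt0 s_le1; have s01 : 0 <= s <= 1 by rewrite s_le1 ltW.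
have := z0_min _ (C_convex C_z0 C_z s01); rewrite /sqdist /=.
suff -> : dot ((1 - s) *: z0.1 + s *: z.1) ((1 - s) *: z0.1 + s *: z.1) +
    ((1 - s) * z0.2 + s * z.2 + c) * ((1 - s) * z0.2 + s * z.2 + c) =
  dot z0.1 z0.1 + (z0.2 + c) * (z0.2 + c) +
  (2 * s * (dot z0.1 z.1 - dot z0.1 z0.1 + (z0.2 + c) * (z.2 - z0.2)) +
   s ^+ 2 * (dot (z.1 - z0.1) (z.1 - z0.1) + (z.2 - z0.2) ^+ 2)) by lra.
by dot_expand; rewrite [dot z.1 z0.1]dotC; ring.
Qed.

(* Separate by the hyperplane through the point of [C] nearest to (0, -c). *)
Lemma near_separation : compact C -> 0 < c -> (exists v, C (0, v)) ->
  (forall v, C (0, v) -> 0 <= v) ->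
  exists g, forall z, C z -> - c <= z.2 + dot g z.1.
Proof.
move=> C_compact c_gt0 [v0 C_0v0] C_0_ge0.
have sqdist_cont : continuous sqdist.
  move=> z; apply: (@continuousD _ _ _ (fun z => dot z.1 z.1)
    (fun z => (z.2 + c) * (z.2 + c))).
    by apply: continuous_dot => x; exact: cvg_fst.
  have shift_cont : continuous (fun z : 'rV[R]_n * R => z.2 + c).
    by move=> x; apply: (@continuousD _ _ _ snd (cst c)); [exact: cvg_snd | exact: cst_continuous].
  exact: (@continuousM _ _ (fun z => z.2 + c) (fun z => z.2 + c) z (shift_cont z) (shift_cont z)).
have [z0 /set_mem C_z0 z0_min] :=
  compact_EVT_min (ex_intro _ _ C_0v0) C_compact (continuous_subspaceT sqdist_cont).
have vi := sqdist_min_variational C_z0 (fun z C_z => z0_min z (mem_set C_z)).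
have L0_ge0 := dotxx_ge0 z0.1.
have h_gt0 : 0 < z0.2 + c.
  rewrite ltNge; apply/negP => h_le0.
  have := vi _ C_0v0; rewrite /= dot0r add0r => vi0.
  have v0_ge0 := C_0_ge0 _ C_0v0.
  have h0 : z0.2 + c = 0 by nra.
  have /dotxx_eq0 L00 : dot z0.1 z0.1 = 0 by nra.
  have := C_0_ge0 z0.2; rewrite -L00 -surjective_pairing => /(_ C_z0); lra.
exists ((z0.2 + c)^-1 *: z0.1) => z C_z; have vi_z := vi z C_z.
rewrite dotZl -(ler_pM2l h_gt0) mulrDr mulrA mulfV ?gt_eqF // mul1r; nra.
Qed.

End NearSeparation.

(* Dual of the linear program [jointly_measurable Om u a b]: pairing its four
   constraints [g >= 0], [a - g >= 0], [b - g >= 0], [g - a - b + u >= 0] with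
   cone elements [p1], [p2], [p3], [p4] such that [p1 + p4 = p2 + p3] cancels [g]
   and leaves this value ([p1] does not occur since [g >= 0] has no constant
   term); a negative value certifies that [a] and [b] are not jointly measurable. *)
Definition jm_dual_value (R : realType) n (u a b p2 p3 p4 : 'rV[R]_n) : R :=
  dot a p2 + dot b p3 - dot (a + b - u) p4.

Definition jm_certificate (R : realType) n (Om : set 'rV[R]_n) (u a b : 'rV[R]_n) :=
  exists p1 p2 p3 p4, [/\ pos_cone Om p1 /\ pos_cone Om p2,
    pos_cone Om p3 /\ pos_cone Om p4, p1 + p4 = p2 + p3 &
    jm_dual_value u a b p2 p3 p4 < 0].

Definition near_jointly_measurable (R : realType) n (Om : set 'rV[R]_n)
    (u e f : 'rV[R]_n) (c : R) :=
  exists g : 'rV[R]_n, forall w, Om w ->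
    [/\ - c <= dot g w, dot g w <= dot e w + c, dot g w <= dot f w + c &
        dot e w + dot f w <= dot g w + dot u w + c].

Section NoCertificate.
Variables (R : realType) (n : nat) (Om : set 'rV[R]_n) (u a b : 'rV[R]_n).
Hypothesis Om_state : is_state_space Om u.

Local Notation point := (R * 'rV[R]_n)%type.
Local Notation quadruple := ((point * point) * (point * point))%type.

(* [D] parametrises quadruples of cone elements [t *: w] with [t] in [0, 1];
   [dual_point] maps one to its coefficient of [g] and its dual value. *)
Let scaled (x : point) := x.1 *: x.2.
Let S : set point := `[0, 1] `*` Om.
Let D := (S `*` S) `*` (S `*` S).
Let dual_point (d : quadruple) :=
  (scaled d.1.1 - scaled d.1.2 - scaled d.2.1 + scaled d.2.2,
   jm_dual_value u a b (scaled d.1.2) (scaled d.2.1) (scaled d.2.2)).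

Lemma scaled_pos_cone x : S x -> pos_cone Om (scaled x).
Proof. by case=> /= /[!in_itv] /andP[x1_ge0 _] Om_x2; exists x.1, x.2. Qed.

Lemma scaled_combination x y s : S x -> S y -> 0 <= s <= 1 ->
  exists2 z, S z & scaled z = (1 - s) *: scaled x + s *: scaled y.
Proof.
move=> [/= /[!in_itv] /andP[x1_ge0 x1_le1] Om_x2] [/= /[!in_itv] /andP[y1_ge0 y1_le1] Om_y2].
move=> /andP[s_ge0 s_le1].
have t1_ge0 : 0 <= (1 - s) * x.1 by rewrite mulr_ge0 // subr_ge0.
have t2_ge0 : 0 <= s * y.1 by rewrite mulr_ge0.
have [w Om_w E] := cone_combination Om_state t1_ge0 t2_ge0 Om_x2 Om_y2.
exists ((1 - s) * x.1 + s * y.1, w); last by rewrite /scaled /= !scalerA E.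
split => //=; rewrite in_itv /= addr_ge0 //=.
have : (1 - s) * x.1 <= 1 - s by rewrite ler_piMr // subr_ge0.
have : s * y.1 <= s by rewrite ler_piMr.
lra.
Qed.

Lemma dual_point_cont : continuous dual_point.
Proof.
have scaled_cont (p : quadruple -> point) : continuous p -> continuous (scaled \o p).
  move=> p_cont d; apply: (@continuous_comp _ _ _ p scaled d (p_cont d)).
  by apply: continuousZ; [exact: cvg_fst | exact: cvg_snd].
have fst_cont (X Y : topologicalType) : continuous (@fst X Y) by move=> x; exact: cvg_fst.
have snd_cont (X Y : topologicalType) : continuous (@snd X Y) by move=> x; exact: cvg_snd.
have comp_cont (X Y Z : topologicalType) (f : X -> Y) (g : Y -> Z) :
    continuous f -> continuous g -> continuous (g \o f).
  by move=> f_cont g_cont x; exact: continuous_comp (f_cont x) (g_cont (f x)).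
have c11 := scaled_cont _ (comp_cont _ _ _ _ _ (fst_cont _ _) (fst_cont _ _)).
have c12 := scaled_cont _ (comp_cont _ _ _ _ _ (fst_cont _ _) (snd_cont _ _)).
have c21 := scaled_cont _ (comp_cont _ _ _ _ _ (snd_cont _ _) (fst_cont _ _)).
have c22 := scaled_cont _ (comp_cont _ _ _ _ _ (snd_cont _ _) (snd_cont _ _)).
have dot_cont (v : 'rV[R]_n) (p : quadruple -> 'rV[R]_n) :
    continuous p -> continuous (fun d => dot v (p d)).
  by move=> p_cont; apply: continuous_dot => //; exact: cst_continuous.
apply: continuous_pair.
  exact: continuous_add (continuous_sub (continuous_sub c11 c12) c21) c22.
exact: continuous_sub (continuous_add (dot_cont _ _ c12) (dot_cont _ _ c21)) (dot_cont _ _ c22).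
Qed.

Lemma dual_points_compact : compact (dual_point @` D).
Proof.
apply: continuous_compact; first exact/continuous_subspaceT/dual_point_cont.
have S_compact : compact S.
  by case: Om_state => _ _ Om_compact _; apply: compact_setX => //; exact: segment_compact.
by apply: compact_setX; apply: compact_setX.
Qed.

Lemma dual_points_convex z1 z2 s : (dual_point @` D) z1 -> (dual_point @` D) z2 ->
  0 <= s <= 1 -> (dual_point @` D) ((1 - s) *: z1.1 + s *: z2.1, (1 - s) * z1.2 + s * z2.2).
Proof.
move=> [[[x1 x2] [x3 x4]] [[S1 S2] [S3 S4]] <-] [[[y1 y2] [y3 y4]] [[T1 T2] [T3 T4]] <-] s01.
have [v1 Sv1 E1] := scaled_combination S1 T1 s01.
have [v2 Sv2 E2] := scaled_combination S2 T2 s01.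
have [v3 Sv3 E3] := scaled_combination S3 T3 s01.
have [v4 Sv4 E4] := scaled_combination S4 T4 s01.
exists ((v1, v2), (v3, v4)) => //; rewrite /dual_point /jm_dual_value /= E1 E2 E3 E4.
congr (_, _).
  by apply/rowP => i; rewrite !mxE; ring.
by dot_expand; ring.
Qed.

Lemma near_jointly_measurable_of_no_certificate c :
  ~ jm_certificate Om u a b -> 0 < c -> near_jointly_measurable Om u a b c.
Proof.
move=> no_cert c_gt0; have [[w0 Om_w0] _ _ u1] := Om_state.
have S_at t w : 0 <= t <= 1 -> Om w -> S (t, w) by move=> t01 Om_w; split; rewrite /= ?in_itv.
have S0 w : Om w -> S (0, w) by apply: S_at; rewrite lexx ler01.
have S1 w : Om w -> S (1, w) by apply: S_at; rewrite lexx ler01.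
have dual_ge0 v : (dual_point @` D) (0, v) -> 0 <= v.
  move=> [[[x1 x2] [x3 x4]] [[S1x S2x] [S3x S4x]] [L0 <-]].
  rewrite leNgt; apply/negP => V_lt0; apply: no_cert.
  exists (scaled x1), (scaled x2), (scaled x3), (scaled x4); split => //; try split;
    try exact: scaled_pos_cone.
  by apply/rowP => i; move/rowP: L0 => /(_ i); rewrite !mxE => L0i; lra.
have [|g near_sep] := near_separation dual_points_convex dual_points_compact c_gt0 _ dual_ge0.
  exists (jm_dual_value u a b w0 0 0).
  exists (((1, w0), (1, w0)), ((0, w0), (0, w0))).
    by split; split; [exact: S1 | exact: S1 | exact: S0 | exact: S0].
  by rewrite /dual_point /scaled /= !scale1r !scale0r !subrr addr0.
exists g => w Om_w.
have sep_at (t1 t2 t3 t4 : R) : 0 <= t1 <= 1 -> 0 <= t2 <= 1 -> 0 <= t3 <= 1 ->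
    0 <= t4 <= 1 -> - c <= jm_dual_value u a b (t2 *: w) (t3 *: w) (t4 *: w) +
      dot g (t1 *: w - t2 *: w - t3 *: w + t4 *: w).
  move=> t1_01 t2_01 t3_01 t4_01.
  apply: (near_sep (dual_point (((t1, w), (t2, w)), ((t3, w), (t4, w))))).
  by exists (((t1, w), (t2, w)), ((t3, w), (t4, w))) => //; do !split; apply: S_at.
have O01 : 0 <= (0 : R) <= 1 by rewrite lexx ler01.
have I01 : 0 <= (1 : R) <= 1 by rewrite lexx ler01.
have := sep_at _ _ _ _ I01 O01 O01 O01; have := sep_at _ _ _ _ O01 I01 O01 O01.
have := sep_at _ _ _ _ O01 O01 I01 O01; have := sep_at _ _ _ _ O01 O01 O01 I01.
rewrite /jm_dual_value !scale1r !scale0r; dot_expand; rewrite u1 //.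
by move=> *; split; lra.
Qed.

End NoCertificate.

Lemma jm_dual_valueZ (R : realType) n (u a b p2 p3 p4 : 'rV[R]_n) k :
  jm_dual_value u a b (k *: p2) (k *: p3) (k *: p4) = k * jm_dual_value u a b p2 p3 p4.
Proof. by rewrite /jm_dual_value; dot_expand; ring. Qed.

Section Certificates.
Variables (R : realType) (n : nat) (Om : set 'rV[R]_n) (u : 'rV[R]_n).
Hypothesis Om_state : is_state_space Om u.

(* [s g + s c u] works, where [s = 1 / (1 + 4 c)] makes [(1 - s) / 4 = s c]. *)
Lemma jointly_measurable_smear_of_near a b c : 0 <= c ->
  near_jointly_measurable Om u a b c ->
  jointly_measurable Om u (smear u (1 + 4 * c)^-1 a) (smear u (1 + 4 * c)^-1 b).
Proof.
case: Om_state => _ _ _ u1 c_ge0 [g near_g]; set s := (1 + 4 * c)^-1.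
have s_gt0 : 0 < s by rewrite invr_gt0; lra.
have sc : (1 - s) / 2 = 2 * (s * c) by rewrite /s; field; lra.
exists (s *: g + (s * c) *: u) => w Om_w; have [g_ge g_le_a g_le_b ab_le] := near_g w Om_w.
rewrite u1 // in ab_le; rewrite /smear sc; dot_expand; rewrite u1 // mulr1.
have h1 : 0 <= s * (dot g w + c) by apply: mulr_ge0; [exact: ltW | lra].
have h2 : 0 <= s * (dot a w + c - dot g w) by apply: mulr_ge0; [exact: ltW | lra].
have h3 : 0 <= s * (dot b w + c - dot g w) by apply: mulr_ge0; [exact: ltW | lra].
have h4 : 0 <= s * (dot g w + 1 + c - dot a w - dot b w) by apply: mulr_ge0; [exact: ltW | lra].
by split; lra.
Qed.

Lemma jm_certificate_of_lambda_ef_lt e f l :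
  effect Om u e -> effect Om u f -> l <= 1 -> lambda_ef Om u e f < l ->
  jm_certificate Om u (smear u l e) (smear u l f).
Proof.
move=> e_eff f_eff l_le1 lt_l.
have [//|no_cert] := pselect (jm_certificate Om u (smear u l e) (smear u l f)).
have ef_ge := lambda_ef_ge_half Om_state e_eff f_eff.
have ef_le1 := lambda_ef_le1 Om_state e_eff f_eff.
set ef := lambda_ef Om u e f in lt_l ef_ge ef_le1.
pose c := (l - ef) / 8; have c_gt0 : 0 < c by rewrite divr_gt0; lra.
have := jointly_measurable_smear_of_near (ltW c_gt0)
  (near_jointly_measurable_of_no_certificate Om_state no_cert c_gt0).
rewrite !smear_smear => jm.
have : (1 + 4 * c)^-1 * l <= ef.
  apply: lambda_ef_ge; split => //; apply/andP; split.
    by rewrite mulr_ge0 // ?invr_ge0; lra.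
  by rewrite ler_pdivrMl; lra.
by rewrite ler_pdivrMl; [rewrite /c; nra | lra].
Qed.

(* [p1 + p4] cannot vanish: all [p_i] would then be zero, and so would the dual
   value. *)
Lemma jm_certificate_state a b : jm_certificate Om u a b ->
  exists al p1 p2 p3 p4, [/\ Om al, [/\ pos_cone Om p1, pos_cone Om p2,
    pos_cone Om p3 & pos_cone Om p4], p1 + p4 = al /\ p2 + p3 = al &
    jm_dual_value u a b p2 p3 p4 < 0].
Proof.
move=> [p1 [p2 [p3 [p4 [[c1 c2] [c3 c4] E V_lt0]]]]].
have [t [al [t_ge0 Om_al] Et]] := pos_coneD Om_state c1 c4.
have t_gt0 : 0 < t.
  rewrite lt_def t_ge0 andbT; apply/eqP => t0; move: Et; rewrite t0 scale0r => E0.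
  have u1 := pos_cone_unit_ge0 Om_state c1; have u2 := pos_cone_unit_ge0 Om_state c2.
  have u3 := pos_cone_unit_ge0 Om_state c3; have u4 := pos_cone_unit_ge0 Om_state c4.
  have u14 := f_equal (dot u) E0; have u23 := f_equal (dot u) E.
  rewrite !dotDr dot0r in u14; rewrite E0 !dotDr dot0r in u23.
  have p2_0 : p2 = 0 by apply: (pos_cone_unit_eq0 Om_state c2); lra.
  have p3_0 : p3 = 0 by apply: (pos_cone_unit_eq0 Om_state c3); lra.
  have p4_0 : p4 = 0 by apply: (pos_cone_unit_eq0 Om_state c4); lra.
  by move: V_lt0; rewrite p2_0 p3_0 p4_0 /jm_dual_value !dot0r; lra.
have ti_ge0 : 0 <= t^-1 by rewrite invr_ge0 ltW.
exists al, (t^-1 *: p1), (t^-1 *: p2), (t^-1 *: p3), (t^-1 *: p4); split => //.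
- by split; apply: pos_coneZ.
- by rewrite -!scalerDr -E Et scalerA mulVf ?gt_eqF ?scale1r.
by rewrite jm_dual_valueZ pmulr_rlt0 ?invr_gt0.
Qed.

End Certificates.

(* The CHSH value when Bob's outcome [+1] prepares [p4] (resp. [p3]) in the
   state [p2 + p3] of A. *)
Lemma bell_steered (R : realType) n1 n2 (uA : 'rV[R]_n1) (uB : 'rV[R]_n2) w
    a b b1 b2 p2 p3 p4 :
  hatw w uB = p2 + p3 -> dot uA (p2 + p3) = 1 -> hatw w b1 = p4 -> hatw w b2 = p3 ->
  bell uA uB w a b b1 b2 = 2 - 4 * jm_dual_value uA a b p2 p3 p4.
Proof.
move=> w_uB u_state w_b1 w_b2; move: u_state.
rewrite /bell /dich /jm_dual_value /= !pair2E; dot_expand.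
by rewrite w_uB w_b1 w_b2; dot_expand => u_state; lra.
Qed.

Section Saturation.
Variables (R : realType) (nA nB : nat) (OmA : set 'rV[R]_nA) (uA : 'rV[R]_nA)
  (OmB : set 'rV[R]_nB) (uB : 'rV[R]_nB) (K : set 'M[R]_(nA, nB)).
Hypotheses (OmA_state : is_state_space OmA uA) (OmB_state : is_state_space OmB uB)
  (steer : uniform_universal_steering_with OmA uA OmB uB K).

Lemma steering_effect w q1 q2 : steering OmA uA OmB uB w ->
  pos_cone OmA q1 -> pos_cone OmA q2 -> OmA (q1 + q2) -> q1 + q2 = marginalA w uB ->
  exists2 b, effect OmB uB b & hatw w b = q1.
Proof.
move=> w_steer q1_cone q2_cone q_state q_marg.
have u_q : dot uA (q1 + q2) = 1 by case: OmA_state => _ _ _ ->.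
have u_q1 := pos_cone_unit_ge0 OmA_state q1_cone.
have u_q2 := pos_cone_unit_ge0 OmA_state q2_cone.
rewrite dotDr in u_q.
pose q (i : 'I_2) := if i == ord0 then q1 else q2.
have q_cone i : pos_cone OmA (q i) by rewrite /q; case: ifP.
have q_unit i : 0 <= dot uA (q i) <= 1 by rewrite /q; case: ifP => _; apply/andP; split; lra.
have q_sum : \sum_(i < 2) q i = marginalA w uB by rewrite big_ord_recl big_ord1.
have [b [b_eff _ w_b]] := w_steer 2%N q q_cone q_unit q_sum.
by exists (b ord0) => //; rewrite -w_b.
Qed.

Lemma bell_gt_of_certificate e f l : 0 < l ->
  jm_certificate OmA uA (smear uA l e) (smear uA l f) ->
  exists w b1 b2, [/\ composite_states K uA uB w, effect OmB uB b1,
    effect OmB uB b2 & 2 / l < bell uA uB w e f b1 b2].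
Proof.
move=> l_gt0 /(jm_certificate_state OmA_state).
move=> [al [p1 [p2 [p3 [p4 [OmA_al [c1 c2 c3 c4] [E14 E23] V_lt0]]]]]].
have [w [w_state [w_marg w_steer]]] := steer OmA_al.
have [b1 b1_eff w_b1] : exists2 b1, effect OmB uB b1 & hatw w b1 = p4.
  by apply: (steering_effect w_steer c4 c1); rewrite addrC E14.
have [b2 b2_eff w_b2] : exists2 b2, effect OmB uB b2 & hatw w b2 = p3.
  by apply: (steering_effect w_steer c3 c2); rewrite addrC E23.
exists w, b1, b2; split => //.
have u_al : dot uA (p2 + p3) = 1 by rewrite E23; case: OmA_state => _ _ _ ->.
have := bell_steered (smear uA l e) (smear uA l f) (etrans w_marg (esym E23)) u_al w_b1 w_b2.
by rewrite bell_smear => bell_l; rewrite ltr_pdivrMr // mulrC bell_l; lra.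
Qed.

Lemma bell_near_lambda_opt eps : 0 < eps ->
  exists w a1 a2 b1 b2,
  [/\ composite_states K uA uB w, effect OmA uA a1 /\ effect OmA uA a2,
      effect OmB uB b1 /\ effect OmB uB b2 &
      2 / lambda_opt OmA uA - eps < bell uA uB w a1 a2 b1 b2].
Proof.
move=> eps_gt0; have [[al0 OmA_al0] _ _ _] := OmA_state.
have lo_ge := lambda_opt_ge_half OmA_state; have lo_le1 := lambda_opt_le1 OmA_state.
set lo := lambda_opt OmA uA in lo_ge lo_le1 *.
have [small|large] := ltrP (2 / lo - eps) 2.
  have [w [[Kw w_1] _]] := steer OmA_al0.
  exists w, uA, uA, uB, uB; split => //; try split; try exact: effect_unit.
  by rewrite /bell /dich /= !subrr !subr0 w_1; lra.
pose l := 2 / (2 / lo - eps / 2).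
have l_gt0 : 0 < l by rewrite divr_gt0 //; lra.
have lo_lt_l : lo < l.
  rewrite ltr_pdivlMr; last lra.
  by rewrite mulrBr mulrCA divff ?mulr1; nra.
have [_ [e [f [e_eff f_eff ->]]] ef_lt_l] : exists2 y, lambda_efs OmA uA y & y < l.
  exact: inf_lt (lambda_efs_nonempty OmA_state) lo_lt_l.
have l_le1 : l <= 1 by rewrite ler_pdivrMr; lra.
have [w [b1 [b2 [w_state b1_eff b2_eff bell_gt]]]] := bell_gt_of_certificate l_gt0
  (jm_certificate_of_lambda_ef_lt OmA_state e_eff f_eff l_le1 ef_lt_l).
exists w, e, f, b1, b2; split => //.
by move: bell_gt; rewrite /l invf_div mulrCA divff ?mulr1; lra.
Qed.

End Saturation.

Unset Implicit Arguments.

Theorem theorem1 (R : realType) (nA nB : nat)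
  (OmA : set 'rV[R]_nA) (uA : 'rV[R]_nA)
  (OmB : set 'rV[R]_nB) (uB : 'rV[R]_nB)
  (K : set 'M[R]_(nA, nB)) :
  is_state_space OmA uA -> is_state_space OmB uB ->
  composite_cone OmA OmB K ->
  uniform_universal_steering_with OmA uA OmB uB K ->
  (forall w a1 a2 b1 b2,
     composite_states K uA uB w ->
     effect OmA uA a1 -> effect OmA uA a2 ->
     effect OmB uB b1 -> effect OmB uB b2 ->
     bell uA uB w a1 a2 b1 b2 <= 2 / lambda_opt OmA uA) /\
  (forall eps : R, 0 < eps ->
     exists w a1 a2 b1 b2,
     [/\ composite_states K uA uB w,
         effect OmA uA a1 /\ effect OmA uA a2,
         effect OmB uB b1 /\ effect OmB uB b2 &
         2 / lambda_opt OmA uA - eps < bell uA uB w a1 a2 b1 b2]).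
Proof.
move=> OmA_state OmB_state KC steer; split; last exact: bell_near_lambda_opt.
by move=> w a1 a2 b1 b2; exact: bell_le_lambda_opt.
Qed.
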